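(* Let $n\geq 1$ and $s\geq 1$ be integers. Let $G$ be a connected graph on $n+s$ vertices and let $S\subseteq V(G)$ with $|S|=s$. Suppose that every non-terminal level with respect to $S$ contains at least $2$ vertices. Then \[ \sigma(S)\leq \begin{cases} \frac{1}{4}(n^2+2n), & \text{if } 2\mid n,\\[2pt] \frac{1}{4}(n^2+2n+1), & \text{if } 2\nmid n. \end{cases} \]
   Context: For a connected graph $G$ and $\emptyset\neq S\subseteq V(G)$, $d_G(S,u)=\min\{d_G(u,v): v\in S\}$, and the status of $S$ is $\sigma(S)=\sigma_G(S)=\sum_{u\in V(G)} d_G(S,u)$. For $i\geq 1$, the $i$-th level with respect to $S$ is the set of vertices $u$ with $d_G(S,u)=i$. The terminal level is the nonempty level with the largest index $i$; the non-terminal levels are all levels $1,\dots,r$ preceding the terminal level $r+1$ (all of which are nonempty by connectivity). *)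

(* A simple graph is a symmetric irreflexive relation on a finType. *)
From mathcomp Require Import all_boot.
Set Implicit Arguments. Unset Strict Implicit. Unset Printing Implicit Defensive.

Section GraphDist.
Variables (T : finType) (e : rel T).

Definition walkn (k : nat) (x y : T) : bool :=
  [exists p : k.-tuple T, path e x p && (last x p == y)].

(* graph distance: least k with a k-edge walk from x to y
   (searched over 0..#|T|-1; equals #|T| if y is unreachable, which
   never happens in a connected graph) *)
Definition dist (x y : T) : nat := find (fun k => walkn k x y) (iota 0 #|T|).

Definition distS (S : {set T}) (u : T) : nat := \big[minn/#|T|]_(v in S) dist v u.

Definition status (S : {set T}) : nat := \sum_(u : T) distS S u.

Definition level (S : {set T}) (i : nat) : {set T} := [set u | distS S u == i].

Definition terminal_index (S : {set T}) : nat := \max_(u : T) distS S u.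

Definition connected_graph : Prop := forall x y : T, connect e x y.
End GraphDist.

From mathcomp Require Import all_boot zify.

Set Implicit Arguments.
Unset Strict Implicit.
Unset Printing Implicit Defensive.

(* Let c_i be the number of vertices at distance more than i from S, so that
   sigma(S) = c_0 + ... + c_(t-1) where t is the terminal index.  Then c_0 = n,
   and passing from c_i to c_(i+1) removes the level i+1, which has at least two
   vertices as long as i+1 < t; hence c_i <= n - 2i and
   sigma(S) <= t n - t (t - 1) = t (n + 1 - t) <= (n + 1)^2 / 4, with the
   bound improving to (n^2 + 2n) / 4 when n is even because then n + 1 - 2t is
   odd. *)

Lemma sum_mem_card (T : finType) (A : {set T}) : \sum_(u : T) (u \in A : nat) = #|A|.
Proof. by rewrite -sum1_card [RHS]big_mkcond; apply: eq_bigr => u _; case: (u \in A). Qed.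

Lemma sum_ltn_minn (t d : nat) : \sum_(i < t) (i < d : nat) = minn t d.
Proof.
elim: t => [|t IHt]; first by rewrite big_ord0 min0n.
by rewrite big_ord_recr /= IHt; case: (ltnP t d) => /=; lia.
Qed.

Section Superlevels.
Variables (T : finType) (d : T -> nat).

Definition superlevel (i : nat) : {set T} := [set u | i < d u].

Lemma sum_card_superlevel (t : nat) :
  (forall u, d u <= t) -> \sum_(u : T) d u = \sum_(i < t) #|superlevel i|.
Proof.
move=> d_le_t; under [RHS]eq_bigr => i _ do rewrite -sum_mem_card.
rewrite exchange_big /=; apply: eq_bigr => u _.
under eq_bigr => i _ do rewrite inE.
by rewrite sum_ltn_minn; have := d_le_t u; lia.
Qed.

Lemma card_superlevelS (i : nat) :
  #|superlevel i| = #|superlevel i.+1| + #|[set u | d u == i.+1]|.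
Proof.
rewrite -!sum_mem_card -big_split /=; apply: eq_bigr => u _.
by rewrite !inE; case: (ltngtP i.+1 (d u)) => /=; lia.
Qed.

End Superlevels.

Lemma sum_le_staircase (t n : nat) (f : nat -> nat) :
  (forall i, i < t -> f i + 2 * i <= n) -> \sum_(i < t) f i + t * (t - 1) <= t * n.
Proof.
elim: t => [|t IHt] f_le; first by rewrite big_ord0.
rewrite big_ord_recr /=.
have := IHt (fun i lt_it => f_le i (ltnW lt_it)).
have := f_le t (ltnSn t).
by case: t {IHt f_le} => [|t]; rewrite ?big_ord0 ?subn1 /=; nia.
Qed.

Lemma consecutive_square_gap (t k : nat) : t.+1 * k.*2 <= k * k.+1 + t.+1 * t.
Proof.
by case: (leqP t k) => [/subnKC <- | /ltnW /subnKC <-]; set j := (_ - _); nia.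
Qed.

Lemma quarter_square_bound (n t x : nat) :
  x + t * (t - 1) <= t * n -> 4 * x <= n ^ 2 + 2 * n + odd n.
Proof.
case: t => [|t]; first by rewrite mul0n; lia.
move: (odd_double_half n) (consecutive_square_gap t n./2).
rewrite subn1 /=; move: (odd n) n./2 => b k <-.
by case: b => /=; nia.
Qed.

Lemma bigmin_le (I : eqType) (r : seq I) (P : pred I) (F : I -> nat) x u :
  u \in r -> P u -> \big[minn/x]_(v <- r | P v) F v <= F u.
Proof.
elim: r => // a r IHr; rewrite inE big_cons => /orP [/eqP <- -> | ur Pu].
  exact: geq_minl.
case: (P a); last exact: IHr.
exact: leq_trans (geq_minr _ _) (IHr ur Pu).
Qed.

Section DistanceToSet.
Variables (T : finType) (e : rel T) (S : {set T}).

Lemma dist_xx (x : T) : dist e x x = 0.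
Proof.
have card_T_gt0 : 0 < #|T| by apply/card_gt0P; exists x.
rewrite /dist -(prednK card_T_gt0) /= /walkn.
by have -> // : [exists p : 0.-tuple T, path e x p && (last x p == x)];
  apply/existsP; exists [tuple]; rewrite /= eqxx.
Qed.

Lemma distS_mem (u : T) : u \in S -> distS e S u = 0.
Proof.
move=> uS; apply/eqP; rewrite -leqn0 -(dist_xx u).
exact: bigmin_le (mem_index_enum u) uS.
Qed.

Lemma distS_le_terminal (u : T) : distS e S u <= terminal_index e S.
Proof. exact: (leq_bigmax (F := distS e S) u). Qed.

Lemma status_eq_sum_superlevel :
  status e S = \sum_(i < terminal_index e S) #|superlevel (distS e S) i|.
Proof. exact/sum_card_superlevel/distS_le_terminal. Qed.

Lemma card_superlevel0 : #|superlevel (distS e S) 0| <= #|~: S|.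
Proof.
apply: subset_leq_card; apply/subsetP => u; rewrite !inE.
by apply: contraL => /distS_mem ->.
Qed.

Lemma card_superlevel_le :
  (forall j, 1 <= j < terminal_index e S -> 2 <= #|level e S j|) ->
  forall i, i < terminal_index e S -> #|superlevel (distS e S) i| + 2 * i <= #|~: S|.
Proof.
move=> big_levels; elim=> [|i IHi] lt_it; first by rewrite addn0 card_superlevel0.
have := IHi (ltnW lt_it); rewrite card_superlevelS.
have := big_levels i.+1 lt_it; rewrite /level; lia.
Qed.

End DistanceToSet.

Theorem lemma6 (n s : nat) (T : finType) (e : rel T) (S : {set T}) :
  1 <= n -> 1 <= s ->
  symmetric e -> irreflexive e -> connected_graph e ->
  #|T| = n + s -> #|S| = s ->
  (forall i, 1 <= i < terminal_index e S -> 2 <= #|level e S i|) ->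
  (if odd n then 4 * status e S <= n ^ 2 + 2 * n + 1
   else 4 * status e S <= n ^ 2 + 2 * n).
Proof.
move=> _ _ _ _ _ card_T card_S big_levels.
have card_notS : #|~: S| = n by have := cardsC S; lia.
have := quarter_square_bound
  (sum_le_staircase (card_superlevel_le big_levels)).
by rewrite -status_eq_sum_superlevel card_notS; case: (odd n); rewrite ?addn0.
Qed.
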